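(* Let $q$ be a prime power, let $p\ge2$ be an integer, and let $1\le d<p$. For every function $f:\mathbb{F}_q^n\to[0,\infty)$, $$\sum_{\substack{(v_1,\dots,v_p)\in(\mathbb{F}_q^n)^p\\ \mathrm{rank}[v_1,\dots,v_p]=d}}\ \prod_{j=1}^pf(v_j)\le\binom{p}{d}\sum_{m=0}^{p-d}\binom{p-d}{m}(q^d-1)^{p-d-m}q^{nd}\,f(0)^m\,\|f\|_1^{d-1}\,\|f\|_{p-d-m+1}^{p-d-m+1}.$$
   Context: The sum is over ordered $p$-tuples whose linear span has dimension exactly $d$ ($[v_1,\dots,v_p]$ is the $n\times p$ matrix with these columns). For $f:\mathbb{F}_q^n\to\mathbb{R}$ and $r\in(0,\infty)$, $\|f\|_r=\big(q^{-n}\sum_{x\in\mathbb{F}_q^n}|f(x)|^r\big)^{1/r}$. *)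

From HB Require Import structures.
From mathcomp Require Import all_boot all_order all_algebra.
From mathcomp Require Import reals exp.
Set Implicit Arguments. Unset Strict Implicit. Unset Printing Implicit Defensive.
Import Order.TTheory GRing.Theory Num.Theory.
Local Open Scope ring_scope.

Definition lrnorm (R : realType) (F : finFieldType) (n : nat)
    (f : 'cV[F]_n -> R) (r : R) : R :=
  powR ((#|F|%:R ^+ n)^-1 * \sum_(x : 'cV[F]_n) powR `|f x| r) r^-1.

Definition colmx (F : finFieldType) (n p : nat) (v : {ffun 'I_p -> 'cV[F]_n})
  : 'M[F]_(n, p) := \matrix_(i < n, j < p) v j i ord0.

From mathcomp Require Import all_boot all_order all_algebra.
From mathcomp Require Import reals exp.
From mathcomp Require Import ring zify.
Set Implicit Arguments. Unset Strict Implicit. Unset Printing Implicit Defensive.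
Import Order.TTheory GRing.Theory Num.Theory.
Local Open Scope ring_scope.

(* A family of rank d has d columns, indexed by some S, spanning all the others;
   it is therefore determined by those columns u and by the coefficient vectors
   of the remaining p - d columns.  Summing over the C(p, d) choices of S and over
   these parameters bounds the left-hand side by
     C(p, d) * sum_u prod_i f (u_i) * (sum_c f (sum_i c_i u_i)) ^ (p - d).
   Separating c = 0 and expanding binomially, the contribution of the q^d - 1
   vectors c <> 0 is handled by the power-mean inequality and, for each fixed
   c <> 0, by AM-GM combined with the change of variables u_i0 |-> sum_i c_i u_i,
   a bijection when c_i0 <> 0. *)

Section RealInequalities.
Variable R : realDomainType.

Lemma ler_sum_surj (X Y : finType) (h : X -> Y) (P : pred Y) (G : Y -> R) :
  (forall y, 0 <= G y) -> (forall y, P y -> exists x, h x = y) ->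
  \sum_(y | P y) G y <= \sum_x G (h x).
Proof.
move=> G0 hP; rewrite (partition_big h predT) //= [X in _ <= X](bigID P) /=.
rewrite -[X in X <= _]addr0; apply: lerD; last by do 2![apply: sumr_ge0 => ? _].
apply: ler_sum => y Py; have [x <-] := hP y Py.
rewrite (bigD1 x) //= lerDl; exact: sumr_ge0.
Qed.

Lemma rearrangement_exprS (x y : R) (k : nat) : 0 <= x -> 0 <= y ->
  x * y ^+ k + y * x ^+ k <= x ^+ k.+1 + y ^+ k.+1.
Proof.
move=> x0 y0; rewrite -subr_ge0.
have -> : x ^+ k.+1 + y ^+ k.+1 - (x * y ^+ k + y * x ^+ k) =
          (x - y) * (x ^+ k - y ^+ k) by rewrite !exprS; ring.
have [xy|/ltW yx] := lerP x y.
  by rewrite mulr_le0 // subr_le0 // lerXn2r.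
by rewrite mulr_ge0 // subr_ge0 // lerXn2r.
Qed.

Lemma chebyshev_sum_exprS (I : finType) (A : pred I) (a : I -> R) (k : nat) :
  (forall i, 0 <= a i) ->
  (\sum_(i in A) a i) * (\sum_(i in A) a i ^+ k) <= #|A|%:R * \sum_(i in A) a i ^+ k.+1.
Proof.
move=> a0.
have symmetrize (G : I -> I -> R) :
    (\sum_(i in A) \sum_(j in A) G i j) *+ 2 = \sum_(i in A) \sum_(j in A) (G i j + G j i).
  rewrite mulr2n [X in _ + X]exchange_big -big_split /=.
  by apply: eq_bigr => i _; rewrite -big_split.
have -> : #|A|%:R * \sum_(i in A) a i ^+ k.+1 = \sum_(i in A) \sum_(j in A) a j ^+ k.+1.
  by rewrite sumr_const mulr_natl.
rewrite -(ler_pMn2r (ltn0Sn 1)) big_distrlr /= !symmetrize.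
apply: ler_sum => i _; apply: ler_sum => j _; rewrite addrC.
exact: rearrangement_exprS.
Qed.

Lemma power_mean_sum (I : finType) (A : pred I) (a : I -> R) (k : nat) :
  (forall i, 0 <= a i) ->
  (\sum_(i in A) a i) ^+ k.+1 <= #|A|%:R ^+ k * \sum_(i in A) a i ^+ k.+1.
Proof.
move=> a0; elim: k => [|k IH]; first by rewrite mul1r.
have sum_ge0 : 0 <= \sum_(i in A) a i by exact: sumr_ge0.
rewrite exprS (le_trans (ler_wpM2l sum_ge0 IH)) // mulrCA exprSr -mulrA.
by rewrite ler_wpM2l ?exprn_ge0 // chebyshev_sum_exprS.
Qed.

Lemma AGM_mulrX (a b : R) (k : nat) : 0 <= a -> 0 <= b ->
  (a * b ^+ k) *+ k.+1 <= a ^+ k.+1 + b ^+ k.+1 *+ k.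
Proof.
move=> a0 b0.
pose E (i : 'I_k.+1) := if val i == 0%N then a ^+ k.+1 else b ^+ k.+1.
have E0 : {in predT, forall i, 0 <= E i *+ #|predT : {pred 'I_k.+1}|}.
  by move=> i _; rewrite /E; case: ifP => _; rewrite mulrn_wge0 // exprn_ge0.
have := (leif_AGM_scaled E0).1; rewrite /= card_ord.
rewrite big_ord_recl [in X in _ <= X]big_ord_recl /E /=.
rewrite prodr_const sumr_const !card_ord.
have -> : a ^+ k.+1 *+ k.+1 * (b ^+ k.+1 *+ k.+1) ^+ k = (a * b ^+ k *+ k.+1) ^+ k.+1.
  rewrite -[_ *+ k.+1]mulr_natr -[b ^+ _ *+ _]mulr_natr -[a * _ *+ _]mulr_natr.
  by rewrite !exprMn -!exprM mulnC !exprS; ring.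
by rewrite ler_pXn2r ?nnegrE ?addr_ge0 ?mulrn_wge0 ?mulr_ge0 ?exprn_ge0.
Qed.

End RealInequalities.

Definition lincomb (F : finFieldType) (n : nat) (I : finType)
    (u : {ffun I -> 'cV[F]_n}) (c : {ffun I -> F}) : 'cV[F]_n :=
  \sum_i c i *: u i.

Lemma lincomb0 (F : finFieldType) (n : nat) (I : finType) (u : {ffun I -> 'cV[F]_n}) :
  lincomb u 0 = 0.
Proof. by apply: big1 => i _; rewrite ffunE scale0r. Qed.

Section SumsOverFamilies.
Variables (R : realDomainType) (F : finFieldType) (n : nat) (f : 'cV[F]_n -> R).
Hypothesis f_ge0 : forall x, 0 <= f x.
Variable I : finType.
Notation family := {ffun I -> 'cV[F]_n}.

Lemma sum_prod_pick (i0 : I) (g : 'cV[F]_n -> R) :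
  \sum_(u : family) g (u i0) * \prod_(i | i != i0) f (u i)
  = (\sum_x g x) * (\sum_x f x) ^+ #|I|.-1.
Proof.
pose G (i : I) x := if i == i0 then g x else f x.
transitivity (\sum_(u : family) \prod_i G i (u i)).
  apply: eq_bigr => u _; rewrite [RHS](bigD1 i0) //= /G eqxx.
  by congr (_ * _); apply: eq_bigr => i /negbTE ->.
rewrite -bigA_distr_bigA /= (bigD1 i0) //= /G eqxx; congr (_ * _).
rewrite (eq_bigr (fun _ => \sum_x f x)) => [|i /negbTE -> //].
by rewrite prodr_const cardC1.
Qed.

(* For [c != 0] with [c i0 != 0], replacing [u i0] by [lincomb u c] is a bijection
   of families, so [f (lincomb u c)] and [f (u i0)] have the same weighted power
   sums; AM-GM then splits the mixed product [f (u i0) * f (lincomb u c) ^+ k]. *)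
Lemma sum_prod_lincombX (c : {ffun I -> F}) (k : nat) : c != 0 ->
  \sum_(u : family) (\prod_i f (u i)) * f (lincomb u c) ^+ k
   <= (\sum_x f x) ^+ #|I|.-1 * \sum_x f x ^+ k.+1.
Proof.
move=> c_neq0.
have [i0 ci0_neq0] : exists i0, c i0 != 0.
  apply/existsP; apply: contraR c_neq0 => /existsPn c0.
  by apply/eqP/ffunP => i; rewrite ffunE; apply/eqP; rewrite -[_ == _]negbK c0.
pose rest (u : family) := \sum_(j | j != i0) c j *: u j.
have lincombE u : lincomb u c = c i0 *: u i0 + rest u by rewrite /lincomb (bigD1 i0).
pose phi (u : family) : family := [ffun i => if i == i0 then lincomb u c else u i].
pose psi (u : family) : family :=
  [ffun i => if i == i0 then (c i0)^-1 *: (u i0 - rest u) else u i].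
have phi_out u j : j != i0 -> phi u j = u j by rewrite ffunE => /negbTE ->.
have psi_out u j : j != i0 -> psi u j = u j by rewrite ffunE => /negbTE ->.
have rest_phi u : rest (phi u) = rest u by apply: eq_bigr => j /phi_out ->.
have rest_psi u : rest (psi u) = rest u by apply: eq_bigr => j /psi_out ->.
have phi_bij : bijective phi.
  exists psi => u; apply/ffunP => i; have [->|hi] := eqVneq i i0.
  - by rewrite ffunE eqxx rest_phi ffunE eqxx lincombE addrK scalerA mulVf // scale1r.
  - by rewrite psi_out // phi_out.
  - by rewrite ffunE eqxx lincombE rest_psi ffunE eqxx scalerA mulfV // scale1r subrK.
  - by rewrite phi_out // psi_out.
pose P (u : family) := \prod_(i | i != i0) f (u i).
have P_ge0 u : 0 <= P u by exact: prodr_ge0.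
have sum_lincomb_pick : \sum_(u : family) f (lincomb u c) ^+ k.+1 * P u
                      = \sum_(u : family) f (u i0) ^+ k.+1 * P u.
  rewrite [RHS](reindex phi); last exact: onW_bij.
  apply: eq_bigr => u _; rewrite /phi ffunE eqxx; congr (_ * _).
  by apply: eq_bigr => j /phi_out ->.
rewrite mulrC -(sum_prod_pick i0 (fun x => f x ^+ k.+1)) -(ler_pMn2r (ltn0Sn k)).
rewrite -sumrMnl mulrS -[in X in _ + X]sum_lincomb_pick -sumrMnl -big_split /=.
apply: ler_sum => u _; rewrite (bigD1 i0) //= -/(P u) mulrAC -!mulrnAl -mulrDl ler_wpM2r //.
by rewrite mulrnAl AGM_mulrX.
Qed.

Lemma sum_prod_nonzero_lincombX (k : nat) : (0 < #|I|)%N ->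
  \sum_(u : family) (\prod_i f (u i)) *
      (\sum_(c : {ffun I -> F} | c != 0) f (lincomb u c)) ^+ k
  <= #|[pred c : {ffun I -> F} | c != 0]|%:R ^+ k *
     ((\sum_x f x) ^+ #|I|.-1 * \sum_x f x ^+ k.+1).
Proof.
move=> /card_gt0P [i0 _]; case: k => [|k].
  rewrite !expr0 mul1r; under eq_bigr do rewrite mulr1 (bigD1 i0) //=.
  by rewrite sum_prod_pick mulrC.
set N := #|_|; apply: (@le_trans _ _ (\sum_(u : family) (\prod_i f (u i)) *
   (N%:R ^+ k * \sum_(c : {ffun I -> F} | c != 0) f (lincomb u c) ^+ k.+1))).
  apply: ler_sum => u _; rewrite ler_wpM2l ?prodr_ge0 //.
  exact: (power_mean_sum [pred c : {ffun I -> F} | c != 0]).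
under eq_bigr do rewrite mulrCA mulr_sumr.
rewrite -mulr_sumr exchange_big /= exprSr -mulrA ler_wpM2l ?exprn_ge0 //.
rewrite mulr_natl -sumr_const (eq_bigl (fun c => c != 0)) //.
by apply: ler_sum => c; exact: sum_prod_lincombX.
Qed.

(* The powers of [f 0] come from the coefficient vector [c = 0], as [lincomb u 0 = 0]. *)
Lemma sum_prod_lincombX_binomial (e : nat) : (0 < #|I|)%N ->
  \sum_(u : family) (\prod_i f (u i)) * (\sum_(c : {ffun I -> F}) f (lincomb u c)) ^+ e
  <= \sum_(m < e.+1) ('C(e, m)%:R * f 0 ^+ m *
      (#|[pred c : {ffun I -> F} | c != 0]|%:R ^+ (e - m) *
       ((\sum_x f x) ^+ #|I|.-1 * \sum_x f x ^+ (e - m).+1))).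
Proof.
move=> I_gt0.
under eq_bigr do rewrite (bigD1 (0 : {ffun I -> F})) //= lincomb0 addrC exprDn mulr_sumr.
rewrite exchange_big /=; apply: ler_sum => m _.
under eq_bigr do rewrite -mulrnAr mulrA -mulr_natr.
rewrite -mulr_suml [X in _ <= X]mulrC (mulrC (f 0 ^+ m)).
by rewrite ler_wpM2r ?mulr_ge0 ?exprn_ge0 ?sum_prod_nonzero_lincombX.
Qed.

End SumsOverFamilies.

Lemma card_nonzero_ffun (I : finType) (F : finFieldType) :
  #|[pred c : {ffun I -> F} | c != 0]| = (#|F| ^ #|I|).-1.
Proof. by rewrite -card_ffun -(cardC1 (0 : {ffun I -> F})); apply: eq_card. Qed.

Definition spanned_by (F : finFieldType) (n p : nat) (S : {set 'I_p})
    (v : {ffun 'I_p -> 'cV[F]_n}) : bool :=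
  [forall j, [exists c : {ffun {x : 'I_p | x \in S} -> F},
     v j == lincomb [ffun i : {x : 'I_p | x \in S} => v (val i)] c]].

Lemma rank_spanned_by (F : finFieldType) (n p : nat) (v : {ffun 'I_p -> 'cV[F]_n}) :
  exists2 S : {set 'I_p}, #|S| = \rank (colmx v) & spanned_by S v.
Proof.
set A := (colmx v)^T; set g := maxrankfun A.
exists [set g k | k : 'I_(\rank A)].
  by rewrite card_imset ?card_ord ?mxrank_tr //; exact: maxrankfun_inj.
apply/forallP => j; apply/existsP.
have /submxP [D jD] : (row j A <= rowsub g A)%MS by rewrite eq_maxrowsub row_sub.
have gS k : g k \in [set g k | k : 'I_(\rank A)] by apply: imset_f.
pose h k : {x : 'I_p | x \in [set g k | k : 'I_(\rank A)]} := exist _ (g k) (gS k).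
exists [ffun i => \sum_(k | h k == i) D 0 k].
have -> : v j = \sum_k D 0 k *: v (g k).
  apply/matrixP => x y; rewrite ord1 summxE.
  move/matrixP: jD => /(_ 0 x); rewrite !mxE => ->.
  by apply: eq_bigr => k _; rewrite !mxE.
rewrite /lincomb (partition_big h predT) //=; apply/eqP; apply: eq_bigr => i _.
by rewrite ffunE scaler_suml; apply: eq_bigr => k /eqP <-; rewrite ffunE.
Qed.

(* The family whose columns on [S] are [u] and whose column [j] off [S] is the
   combination of [u] with coefficients [g j]; every family spanned by [S] arises so. *)
Definition span_extend (F : finFieldType) (n p : nat) (S : {set 'I_p})
    (u : {ffun {x : 'I_p | x \in S} -> 'cV[F]_n})
    (g : {ffun {x : 'I_p | x \in ~: S} -> {ffun {x : 'I_p | x \in S} -> F}}) :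
    {ffun 'I_p -> 'cV[F]_n} :=
  [ffun j => match insub j : option {x : 'I_p | x \in S} with
     | Some i => u i
     | None => match insub j : option {x : 'I_p | x \in ~: S} with
       | Some j' => lincomb u (g j') | None => 0 end end].

Section SpannedFamilies.
Variables (R : realDomainType) (F : finFieldType) (n : nat) (f : 'cV[F]_n -> R).
Hypothesis f_ge0 : forall x, 0 <= f x.
Variables (p : nat) (S : {set 'I_p}).
Notation I := {x : 'I_p | x \in S}.
Notation J := {x : 'I_p | x \in ~: S}.

Lemma prod_span_extend u g : \prod_j f (span_extend u g j) =
  \prod_(i : I) f (u i) * \prod_(j : J) f (lincomb u (g j)).
Proof.
rewrite (bigID (mem S)) /=; congr (_ * _).
  by rewrite (big_sub S); apply: eq_bigr => i _; rewrite ffunE valK.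
rewrite (eq_bigl (mem (~: S))); last by move=> j; rewrite !inE.
rewrite (big_sub (~: S)); apply: eq_bigr => j _.
by rewrite ffunE insubN -?in_setC ?(valP j) // valK.
Qed.

Lemma sum_spanned_by_le :
  \sum_(v : {ffun 'I_p -> 'cV[F]_n} | spanned_by S v) \prod_j f (v j)
  <= \sum_(u : {ffun I -> 'cV[F]_n}) (\prod_i f (u i)) *
        (\sum_(c : {ffun I -> F}) f (lincomb u c)) ^+ #|{: J}|.
Proof.
pose h (x : {ffun I -> 'cV[F]_n} * {ffun J -> {ffun I -> F}}) := span_extend x.1 x.2.
have h_onto v : spanned_by S v -> exists x, h x = v.
  move=> /forallP v_span; pose u : {ffun I -> 'cV[F]_n} := [ffun i => v (val i)].
  pose g : {ffun J -> {ffun I -> F}} :=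
    [ffun j => odflt 0 [pick c | v (val j) == lincomb u c]].
  exists (u, g); apply/ffunP => j; rewrite ffunE.
  case: insubP => [i _ <-|jS]; first by rewrite ffunE.
  case: insubP => [j' _ <-|]; last by rewrite inE jS.
  rewrite ffunE; case: pickP => [c /eqP <- //|no_c].
  have /existsP [c /eqP c_span] := v_span (val j').
  by move: (no_c c); rewrite /= -c_span eqxx.
have prod_ge0 (v : {ffun 'I_p -> 'cV[F]_n}) : 0 <= \prod_j f (v j) by exact: prodr_ge0.
apply: le_trans (ler_sum_surj prod_ge0 h_onto) _.
rewrite -(pair_bigA _ (fun u g => \prod_j f (span_extend u g j))) /=.
apply: ler_sum => u _; under eq_bigr do rewrite prod_span_extend.
by rewrite -mulr_sumr -prodr_const bigA_distr_bigA.
Qed.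

End SpannedFamilies.

Lemma sum_rank_le_sum_spanned (R : realDomainType) (F : finFieldType) (n p d : nat)
    (G : {ffun 'I_p -> 'cV[F]_n} -> R) : (forall v, 0 <= G v) ->
  \sum_(v | \rank (colmx v) == d) G v
  <= \sum_(S : {set 'I_p} | #|S| == d) \sum_(v | spanned_by S v) G v.
Proof.
move=> G_ge0; rewrite (exchange_big_dep predT) //= [X in X <= _]big_mkcond /=.
apply: ler_sum => v _; case: eqP => [<-|_]; last exact: sumr_ge0.
have [S S_card S_span] := rank_spanned_by v.
by rewrite (bigD1 S) /= ?S_card ?eqxx ?S_span // lerDl sumr_ge0.
Qed.

Lemma sum_spanned_by_binomial (R : realDomainType) (F : finFieldType) (n p d : nat)
    (f : 'cV[F]_n -> R) (S : {set 'I_p}) :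
  (forall x, 0 <= f x) -> (0 < d)%N -> #|S| = d ->
  \sum_(v : {ffun 'I_p -> 'cV[F]_n} | spanned_by S v) \prod_j f (v j)
  <= \sum_(m < (p - d).+1) ('C(p - d, m)%:R * f 0 ^+ m *
      ((#|F| ^ d).-1%:R ^+ (p - d - m) *
       ((\sum_x f x) ^+ d.-1 * \sum_x f x ^+ (p - d - m).+1))).
Proof.
move=> f_ge0 d_gt0 S_card; apply: le_trans (sum_spanned_by_le f_ge0 S) _.
have card_S : #|{: {x : 'I_p | x \in S}}| = d by rewrite card_sig -S_card.
have card_notS : #|{: {x : 'I_p | x \in ~: S}}| = (p - d)%N.
  have := cardsC S; rewrite card_ord card_sig (eq_card (_ : [pred x in ~: S] =i ~: S)) //.
  lia.
rewrite card_notS; apply: le_trans (sum_prod_lincombX_binomial f_ge0 _ _) _.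
  by rewrite card_S.
by rewrite card_nonzero_ffun card_S.
Qed.

Section Normalization.
Variables (R : realType) (F : finFieldType) (n : nat) (f : 'cV[F]_n -> R).
Hypothesis f_ge0 : forall x, 0 <= f x.

Lemma lrnorm_natXn (k : nat) :
  lrnorm f k.+1%:R ^+ k.+1 = (#|F|%:R ^+ n)^-1 * \sum_x f x ^+ k.+1.
Proof.
rewrite /lrnorm -powR_mulrn ?powR_ge0 // -powRrM mulVf ?pnatr_eq0 // powRr1.
  by congr (_ * _); apply: eq_bigr => x _; rewrite powR_mulrn ?ger0_norm.
by rewrite mulr_ge0 ?invr_ge0 ?exprn_ge0 ?ler0n ?sumr_ge0 // => x _; exact: powR_ge0.
Qed.

Lemma lrnorm1 : lrnorm f 1 = (#|F|%:R ^+ n)^-1 * \sum_x f x.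
Proof.
have := lrnorm_natXn 0; rewrite mulr1n !expr1 => ->.
by under eq_bigr do rewrite expr1.
Qed.

Lemma lrnorm_weight (d r : nat) : (0 < d)%N ->
  (#|F|%:R : R) ^+ (n * d) * lrnorm f 1 ^+ (d - 1) * lrnorm f r.+1%:R ^+ r.+1
  = (\sum_x f x) ^+ d.-1 * \sum_x f x ^+ r.+1.
Proof.
move=> d_gt0; rewrite lrnorm_natXn lrnorm1 subn1 exprM.
have q_gt0 : (0 < #|F|)%N by apply/card_gt0P; exists 0.
set X := (#|F|%:R : R) ^+ n.
have X_neq0 : X != 0 by rewrite expf_neq0 // pnatr_eq0 -lt0n.
rewrite -(prednK d_gt0) exprS exprMn exprVn; field.
by rewrite X_neq0 expf_neq0.
Qed.

End Normalization.

Theorem lemma3p5 (R : realType) (F : finFieldType) (n p d : nat)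
    (hp : (2 <= p)%N) (hd1 : (1 <= d)%N) (hdp : (d < p)%N)
    (f : 'cV[F]_n -> R) (hf : forall x, 0 <= f x) :
  \sum_(v : {ffun 'I_p -> 'cV[F]_n} | \rank (colmx v) == d) \prod_(j < p) f (v j)
  <= 'C(p, d)%:R *
     \sum_(0 <= m < (p - d).+1)
       'C(p - d, m)%:R * ((#|F|%:R : R) ^+ d - 1) ^+ (p - d - m)
       * (#|F|%:R : R) ^+ (n * d) * f 0 ^+ m
       * lrnorm f 1 ^+ (d - 1)
       * lrnorm f (p - d - m + 1)%:R ^+ (p - d - m + 1).
Proof.
have prod_ge0 (v : {ffun 'I_p -> 'cV[F]_n}) : 0 <= \prod_j f (v j) by exact: prodr_ge0.
apply: (le_trans (sum_rank_le_sum_spanned d prod_ge0)).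
have sum_S_le (S : {set 'I_p}) (S_card : #|S| == d) :=
  sum_spanned_by_binomial (p := p) hf hd1 (eqP S_card).
apply: (le_trans (ler_sum _ sum_S_le)).
rewrite big_mkord; set B := \sum_(m < _) ('C(_, m)%:R * f 0 ^+ m * _).
have -> : \sum_(S : {set 'I_p} | #|S| == d) B = B *+ #|[set S : {set 'I_p} | #|S| == d]|.
  by rewrite -sumr_const; apply: eq_bigl => S; rewrite inE.
rewrite card_draws card_ord -mulr_natl ler_wpM2l //; apply: ler_sum => m _.
have q_gt0 : (0 < #|F|)%N by apply/card_gt0P; exists 0.
rewrite -subn1 natrB ?expn_gt0 ?q_gt0 // natrX addn1 -(lrnorm_weight hf _ hd1).
by rewrite le_eqVlt; apply/orP; left; apply/eqP; ring.
Qed.
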